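(* In the inexact augmented Lagrangian method described in the context, for all $t\ge1$, $$\|\lambda_t-\lambda^*\|\le\sqrt{\|\lambda_1-\lambda^*\|^2+2\beta\sum_{i=1}^{t-1}\epsilon_i}.$$
   Context: Problem: $\min_{x\in\mathcal{X}}f(x)$ s.t. $Ax=b$, with $f:\mathbb{R}^n\to\mathbb{R}$ convex and differentiable, $\mathcal{X}\subseteq\mathbb{R}^n$ nonempty, closed, bounded and convex, $A\in\mathbb{R}^{m\times n}$, $b\in\mathbb{R}^m$. Augmented Lagrangian $\mathcal{L}^\beta(x,\lambda)=f(x)+\langle\lambda,Ax-b\rangle+\frac{\beta}{2}\|Ax-b\|^2$, $\beta>0$; dual function $d(\lambda)=\min_{x\in\mathcal{X}}\mathcal{L}^\beta(x,\lambda)$; $\lambda^*$ is a maximizer of $d$ (assumed to exist); Euclidean norms. Method: given $x_1\in\mathcal{X}$, $\lambda_1$, nonnegative $(\epsilon_t)$, for $t\ge1$ choose $x_{t+1}\in\mathcal{X}$ with $\mathcal{L}^\beta(x_{t+1},\lambda_t)-d(\lambda_t)\le\epsilon_t$ and set $\lambda_{t+1}=\lambda_t+\frac{\beta}{2}(Ax_{t+1}-b)$. *)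

From HB Require Import structures.
From mathcomp Require Import all_boot all_order all_algebra.
From mathcomp Require Import all_classical all_reals all_analysis.
Set Implicit Arguments. Unset Strict Implicit. Unset Printing Implicit Defensive.
Import Order.TTheory GRing.Theory Num.Theory.
Import numFieldNormedType.Exports.
Local Open Scope classical_set_scope.
Local Open Scope ring_scope.

Definition dotv {R : realType} {k : nat} (u v : 'cV[R]_k) : R :=
  \sum_(i < k) u i ord0 * v i ord0.
Definition enorm {R : realType} {k : nat} (v : 'cV[R]_k) : R :=
  Num.sqrt (dotv v v).

Definition convex_fun {R : realType} {n : nat} (f : 'cV[R]_n -> R) : Prop :=
  forall x y t, 0 <= t <= 1 ->
    f (t *: x + (1 - t) *: y) <= t * f x + (1 - t) * f y.

Definition augLag {R : realType} {m n : nat} (f : 'cV[R]_n -> R)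
  (A : 'M[R]_(m, n)) (b : 'cV[R]_m) (beta : R) (x : 'cV[R]_n) (lam : 'cV[R]_m) : R :=
  f x + dotv lam (A *m x - b) + beta / 2 * enorm (A *m x - b) ^+ 2.

(* dual function d(lambda) = min_{x in X} L^beta(x, lambda); written as the
   infimum, which is attained (and hence is the minimum) under the standing
   assumptions (X compact nonempty, L continuous in x). *)
Definition dualf {R : realType} {m n : nat} (f : 'cV[R]_n -> R)
  (X : set 'cV[R]_n) (A : 'M[R]_(m, n)) (b : 'cV[R]_m) (beta : R) (lam : 'cV[R]_m) : R :=
  inf [set augLag f A b beta x lam | x in X].

From HB Require Import structures.
From mathcomp Require Import all_boot all_order all_algebra.
From mathcomp Require Import all_classical all_reals all_analysis.
From mathcomp Require Import lra.
Set Implicit Arguments.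
Unset Strict Implicit.
Unset Printing Implicit Defensive.

Import Order.TTheory GRing.Theory Num.Theory.
Import numFieldNormedType.Exports.
Local Open Scope classical_set_scope.
Local Open Scope ring_scope.

(* Write r' = A x' - b for the residual of an eps-minimiser x' of L(., lam).
   Comparing L(x', lam) with L at the midpoint of x' and an arbitrary x of X
   and using convexity gives d(lam + beta/2 r') >= L(x', lam) - 2 eps
   + beta/4 |r'|^2.  Since d(lam + beta/2 r') <= d(lam* ) <= L(x', lam* ),
   this yields <lam - lam*, r'> + beta/4 |r'|^2 <= 2 eps, which is exactly
   |lam + beta/2 r' - lam*|^2 <= |lam - lam*|^2 + 2 beta eps; summing over
   the iterations gives the bound.  Because d is an infimum, it is a genuine
   lower bound of L(., mu) only once L(., mu) is bounded below on X; this
   comes from compactness of X and continuity of L. *)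

Lemma mxentry_norm_le {K : realDomainType} p q (M : 'M[K]_(p, q)) i j : `|M i j| <= `|M|.
Proof.
rewrite [leRHS]/Num.norm /= mx_normrE.
by apply/bigmax_geP; right; exists (i, j).
Qed.

Lemma mx_norm_trmx {K : realDomainType} p q (M : 'M[K]_(p, q)) : `|M^T| = `|M|.
Proof.
suff le_tr p' q' (N : 'M[K]_(p', q')) : `|N| <= `|N^T|.
  by apply/le_anti; rewrite le_tr -{2}(trmxK M) le_tr.
rewrite [leLHS]/Num.norm /=.
have [->|/mx_norm_neq0 [i ->]] := eqVneq (mx_norm N) 0; first exact: normr_ge0.
by have := mxentry_norm_le N^T i.2 i.1; rewrite mxE.
Qed.

Lemma trmx_continuous {R : realType} p q : continuous (@trmx R p q).
Proof.
move=> M s /= /nbhs_ballP [e e0 es].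
apply/nbhs_ballP; exists e => //= N [_ MN]; apply: es; split => // i j.
by rewrite !mxE; exact: MN.
Qed.

Lemma cV_bounded_closed_compact {R : realType} n (X : set 'cV[R]_n) :
  bounded_set X -> closed X -> compact X.
Proof.
move=> [M [Mreal XM]] cX.
(* [bounded_closed_compact] is only available for row vectors. *)
have -> : X = trmx @` (trmx @^-1` X).
  by apply/seteqP; split => [v Xv | _ [w Xw <-]]; [exists v^T; rewrite /= trmxK | ].
apply: continuous_compact; first exact/continuous_subspaceT/trmx_continuous.
apply: bounded_closed_compact.
  by exists M; split => // M' MM' w Xw; rewrite /= -mx_norm_trmx; apply: XM.
exact: (continuous_closedP _).1 (@trmx_continuous _ _ _) _ cX.
Qed.

Lemma compact_has_lbound {R : realType} (A : set R) : compact A -> has_lbound A.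
Proof.
move=> /compact_bounded [M [Mreal AM]]; exists (- (`|M| + 1)) => x Ax.
have : `|x| <= `|M| + 1 by apply: AM => //; rewrite (le_lt_trans (ler_norm M)) ?ltrDl.
by rewrite ler_norml => /andP[].
Qed.

Section dotv.
Context {R : realType} {k : nat}.
Implicit Types u v w : 'cV[R]_k.

Lemma dotvC u v : dotv u v = dotv v u.
Proof. by apply: eq_bigr => i _; rewrite mulrC. Qed.

Lemma dotvDl u v w : dotv (u + v) w = dotv u w + dotv v w.
Proof. by rewrite /dotv -big_split; apply: eq_bigr => i _; rewrite mxE mulrDl. Qed.

Lemma dotvZl (a : R) u w : dotv (a *: u) w = a * dotv u w.
Proof. by rewrite /dotv mulr_sumr; apply: eq_bigr => i _; rewrite mxE mulrA. Qed.

Lemma dotvBl u v w : dotv (u - v) w = dotv u w - dotv v w.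
Proof. by rewrite -scaleN1r dotvDl dotvZl mulN1r. Qed.

Lemma dotvDr u v w : dotv w (u + v) = dotv w u + dotv w v.
Proof. by rewrite dotvC dotvDl !(dotvC w). Qed.

Lemma dotvZr (a : R) u w : dotv w (a *: u) = a * dotv w u.
Proof. by rewrite dotvC dotvZl dotvC. Qed.

Lemma dotvv_ge0 u : 0 <= dotv u u.
Proof. by apply: sumr_ge0 => i _; rewrite -expr2 sqr_ge0. Qed.

Lemma enorm_sqr u : enorm u ^+ 2 = dotv u u.
Proof. by rewrite sqr_sqrtr // dotvv_ge0. Qed.

End dotv.

Section differentiable_entries.
Context {R : realType} {V : normedModType R}.

Lemma differentiable_mulmx_entry m n p (A : 'M[R]_(m, n)) (g : V -> 'M[R]_(n, p)) i j x :
  (forall k, differentiable (fun y => g y k j) x) ->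
  differentiable (fun y => (A *m g y) i j) x.
Proof.
move=> dg.
have -> : (fun y => (A *m g y) i j) = \sum_k (fun y => A i k * g y k j).
  by apply/funext => y; rewrite mxE fct_sumE.
apply: differentiable_sum => k; apply: differentiableM => //; exact: differentiable_cst.
Qed.

Lemma differentiable_dotv k (g h : V -> 'cV[R]_k) x :
  (forall i, differentiable (fun y => g y i ord0) x) ->
  (forall i, differentiable (fun y => h y i ord0) x) ->
  differentiable (fun y => dotv (g y) (h y)) x.
Proof.
move=> dg dh.
have -> : (fun y => dotv (g y) (h y)) = \sum_i (fun y => g y i ord0 * h y i ord0).
  by apply/funext => y; rewrite fct_sumE.
by apply: differentiable_sum => i; apply: differentiableM.
Qed.

End differentiable_entries.

Lemma differentiable_augLag {R : realType} m n (f : 'cV[R]_n -> R)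
    (A : 'M[R]_(m, n)) (b : 'cV[R]_m) (beta : R) (mu : 'cV[R]_m) x :
  differentiable f x -> differentiable (augLag f A b beta ^~ mu) x.
Proof.
move=> df.
have dres i : differentiable (fun y => (A *m y - b) i ord0) x.
  have -> : (fun y => (A *m y - b) i ord0) = (fun y => (A *m y) i ord0) \- cst (b i ord0).
    by apply/funext => y; rewrite /= !mxE.
  apply: differentiableB; last exact: differentiable_cst.
  by apply: differentiable_mulmx_entry => k; apply: differentiable_coord.
have -> : augLag f A b beta ^~ mu = f + (fun y => dotv mu (A *m y - b))
    + (fun y => beta / 2 * dotv (A *m y - b) (A *m y - b)).
  by apply/funext => y; rewrite /augLag enorm_sqr.
apply: differentiableD; first apply: differentiableD => //.
  by apply: differentiable_dotv => // i; apply: differentiable_cst.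
apply: differentiableM; first exact: differentiable_cst.
exact: differentiable_dotv.
Qed.

Section inexact_augmented_Lagrangian.
Context {R : realType} {m n : nat} (f : 'cV[R]_n -> R) (X : set 'cV[R]_n)
  (A : 'M[R]_(m, n)) (b : 'cV[R]_m) (beta : R).
Local Notation L := (augLag f A b beta).
Local Notation D := (dualf f X A b beta).
Local Notation res x := (A *m x - b).

Lemma augLag_has_lbound mu :
  (forall z, differentiable f z) -> compact X -> has_lbound [set L x mu | x in X].
Proof.
move=> df kX; apply: compact_has_lbound; apply: continuous_compact => //.
apply: continuous_subspaceT => x.
exact/differentiable_continuous/differentiable_augLag.
Qed.

Hypothesis L_lbound : forall mu, has_lbound [set L x mu | x in X].

Lemma dualf_le_augLag mu x : X x -> D mu <= L x mu.
Proof. by move=> Xx; apply: ge_inf (L_lbound mu) _ _; exists x. Qed.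

Hypotheses (f_convex : convex_fun f) (X_convex : convex_set X) (beta_ge0 : 0 <= beta).

Lemma augLag_inexact_min_le lam x' x (eps : R) : X x' -> X x -> L x' lam - D lam <= eps ->
  L x' lam - 2 * eps + beta / 4 * dotv (res x') (res x')
    <= L x (lam + (beta / 2) *: res x').
Proof.
move=> Xx' Xx x'_eps.
pose xm := (2^-1 : R) *: x' + (1 - 2^-1) *: x.
have Xxm : X xm.
  have half_ge0 : 0 <= 2^-1 :> R by lra.
  have half_le1 : 2^-1 <= 1 :> R by lra.
  by have := @X_convex x' x (Itv01 half_ge0 half_le1); rewrite !inE; apply.
have D_le := dualf_le_augLag lam Xxm.
have f_le : f xm <= 2^-1 * f x' + (1 - 2^-1) * f x by apply: f_convex; lra.
have res_xm : res xm = (2^-1 : R) *: res x' + (2^-1 : R) *: res x.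
  rewrite mulmxDr -!scalemxAr; apply/matrixP => i j; rewrite !mxE; lra.
have res_ge0 : 0 <= beta * dotv (res x) (res x) by rewrite mulr_ge0 ?dotvv_ge0.
move: D_le x'_eps f_le res_ge0; rewrite /augLag !enorm_sqr res_xm.
move: (res x') (res x) => r' r.
rewrite !(dotvDl, dotvDr, dotvZl, dotvZr) (dotvC r r'); lra.
Qed.

Lemma dualf_ascent lam x' (eps : R) : X x' -> L x' lam - D lam <= eps ->
  L x' lam - 2 * eps + beta / 4 * dotv (res x') (res x')
    <= D (lam + (beta / 2) *: res x').
Proof.
move=> Xx' x'_eps; apply: lb_le_inf; first by exists (L x' (lam + (beta / 2) *: res x')), x'.
by move=> _ [x Xx <-]; apply: augLag_inexact_min_le.
Qed.

Lemma multiplier_step_dist lamstar lam x' (eps : R) :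
  (forall mu, D mu <= D lamstar) -> X x' -> L x' lam - D lam <= eps ->
  dotv (lam + (beta / 2) *: res x' - lamstar) (lam + (beta / 2) *: res x' - lamstar)
    <= dotv (lam - lamstar) (lam - lamstar) + 2 * beta * eps.
Proof.
move=> lamstar_max Xx' x'_eps.
have ascent := dualf_ascent Xx' x'_eps.
have D_lamstar := dualf_le_augLag lamstar Xx'.
have D_max := lamstar_max (lam + (beta / 2) *: res x').
have gap : dotv (lam - lamstar) (res x') + beta / 4 * dotv (res x') (res x') <= 2 * eps.
  by move: ascent D_lamstar D_max; rewrite /augLag !enorm_sqr dotvBl; lra.
rewrite addrAC; move: (lam - lamstar) (res x') gap => w r gap.
rewrite dotvDl !dotvDr !dotvZl !dotvZr (dotvC r w).
have := ler_wpM2l beta_ge0 gap; lra.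
Qed.

End inexact_augmented_Lagrangian.

Lemma ler_sum_increments {R : realDomainType} (a c : nat -> R) :
  (forall t, (1 <= t)%N -> a t.+1 <= a t + c t) ->
  forall t, (1 <= t)%N -> a t <= a 1%N + \sum_(1 <= i < t) c i.
Proof.
move=> a_incr; elim=> [//|[|t] IH _]; first by rewrite big_geq // addr0.
rewrite big_nat_recr //=; apply: le_trans (a_incr _ _) _ => //.
by rewrite addrA lerD2r IH.
Qed.

Theorem lemma10 (R : realType) (m n : nat)
  (f : 'cV[R]_n -> R) (X : set 'cV[R]_n) (A : 'M[R]_(m, n)) (b : 'cV[R]_m)
  (beta : R) (lamstar : 'cV[R]_m)
  (x : nat -> 'cV[R]_n) (lam : nat -> 'cV[R]_m) (eps : nat -> R) :
  convex_fun f ->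
  (forall z, differentiable f z) ->
  X !=set0 -> closed X -> bounded_set X -> convex_set X ->
  0 < beta ->
  (forall mu, dualf f X A b beta mu <= dualf f X A b beta lamstar) ->
  (forall t, 0 <= eps t) ->
  X (x 1%N) ->
  (forall t, (1 <= t)%N -> X (x t.+1)) ->
  (forall t, (1 <= t)%N ->
     augLag f A b beta (x t.+1) (lam t) - dualf f X A b beta (lam t) <= eps t) ->
  (forall t, (1 <= t)%N -> lam t.+1 = lam t + (beta / 2) *: (A *m x t.+1 - b)) ->
  forall t, (1 <= t)%N ->
    enorm (lam t - lamstar) <=
      Num.sqrt (enorm (lam 1%N - lamstar) ^+ 2 + 2 * beta * \sum_(1 <= i < t) eps i).
Proof.
move=> f_cvx f_diff _ X_closed X_bdd X_cvx beta_gt0 lamstar_max _ _ x_in x_eps lam_step.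
have X_compact := cV_bounded_closed_compact X_bdd X_closed.
have L_lbound mu := augLag_has_lbound A b beta mu f_diff X_compact.
pose d t := dotv (lam t - lamstar) (lam t - lamstar).
have d_incr t : (1 <= t)%N -> d t.+1 <= d t + 2 * beta * eps t.
  move=> t1; rewrite /d lam_step //.
  exact: (multiplier_step_dist L_lbound f_cvx X_cvx (ltW beta_gt0) lamstar_max
           (x_in t t1) (x_eps t t1)).
move=> t t1; rewrite enorm_sqr mulr_sumr; apply: ler_wsqrtr.
exact: (ler_sum_increments d_incr t1).
Qed.
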